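(* Let $k\ge0$ be an integer, let $X_0>1$ be a deterministic real number, and let $X_1,\dots,X_k$ be nonnegative random variables satisfying, for every $0\le i<k$, \[ X_{i+1}-1\ge 2(X_i-1)\qquad\text{and}\qquad \mathbb{E}[X_{i+1}\mid X_0,\dots,X_i]\le X_i^2. \] If $\tau\ge 1+4(X_0-1)$, then \[ \Pr\left[X_k\ge\tau^{2^k}\right]\le 48\left(\frac{X_0-1}{\tau-1}\right)^2. \] *)

From HB Require Import structures.
From mathcomp Require Import all_boot all_order all_algebra.
From mathcomp Require Import all_classical all_reals all_analysis.
Set Implicit Arguments. Unset Strict Implicit. Unset Printing Implicit Defensive.
Import Order.TTheory GRing.Theory Num.Theory.
Local Open Scope classical_set_scope.
Local Open Scope ring_scope.

Definition hist_gen d (T : measurableType d) (R : realType)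
  (X : nat -> T -> R) (i : nat) : set (set T) :=
  [set A | exists j, (j <= i)%N /\ exists B : set R, measurable B /\ A = X j @^-1` B].

Definition hist d (T : measurableType d) (R : realType)
  (X : nat -> T -> R) (i : nat) : set (set T) :=
  <<s hist_gen X i >>.

(* E[Y | sigma(X_0..X_i)] <= Z for nonnegative Y and sigma(X_0..X_i)-measurable
   Z, stated via the defining property of conditional expectation:
   for every A in sigma(X_0..X_i), E[Y 1_A] <= E[Z 1_A]. *)
Definition cond_exp_le d (T : measurableType d) (R : realType)
  (P : probability T R) (X : nat -> T -> R) (i : nat) (Y Z : T -> R) : Prop :=
  forall A, hist X i A ->
    (\int[P]_(t in A) (Y t)%:E <= \int[P]_(t in A) (Z t)%:E)%E.

From HB Require Import structures.
From mathcomp Require Import all_boot all_order all_algebra.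
From mathcomp Require Import all_classical all_reals all_analysis.
From mathcomp Require Import measurable_realfun ring lra.
Set Implicit Arguments. Unset Strict Implicit. Unset Printing Implicit Defensive.
Import Order.TTheory GRing.Theory Num.Theory.
Local Open Scope classical_set_scope.
Local Open Scope ring_scope.

(* Put l_i = (tau^(2^i) - 1)/2, so that l_(i+1) = 2 l_i (l_i + 1), and use the potential
   Phi_l(x) = (min(x, l)/l)^2, which equals 1 as soon as x >= l.  The expectations
   E[Phi_(l_i)(X_i - 1)] do not increase with i: where X_i >= 1 + l_i the old potential
   is already 1, and on the event {X_i < 1 + l_i}, which lies in sigma(X_0, ..., X_i),
   the growth condition bounds the increase of the potential pointwise by
   (X_(i+1) - X_i^2) / (l_i (l_i + 1)), whose integral over that event is nonpositive.
   Hence P[X_k >= tau^(2^k)] <= E[Phi_(l_k)(X_k - 1)] <= Phi_(l_0)(X_0 - 1)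
   <= 4 ((X_0 - 1)/(tau - 1))^2; of the hypothesis on tau only tau > 1 is needed. *)

Section potential.
Context {R : realFieldType}.
Implicit Types l x y tau : R.

Definition potential l x : R := (Order.min x l / l) ^+ 2.

Lemma potential_ge0 l x : 0 <= potential l x.
Proof. exact: sqr_ge0. Qed.

Lemma potential_le_level l x : x <= l -> potential l x = (x / l) ^+ 2.
Proof. by move=> xl; rewrite /potential min_l. Qed.

Lemma potential_ge_level l x : 0 < l -> l <= x -> potential l x = 1.
Proof. by move=> l0 lx; rewrite /potential min_r // divff ?expr1n // gt_eqF. Qed.

Lemma potential_le1 l x : 0 < l -> 0 <= x -> potential l x <= 1.
Proof.
move=> l0 x0; have [xl|/ltW lx] := leP x l; last by rewrite potential_ge_level.
rewrite potential_le_level // expr_le1 ?divr_ge0 ?(ltW l0) //.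
by rewrite ler_pdivrMr // mul1r.
Qed.

Lemma potential_le_sqr l x : 0 < l -> 0 <= x -> potential l x <= (x / l) ^+ 2.
Proof.
move=> l0 x0; have [xl|/ltW lx] := leP x l; first by rewrite potential_le_level.
by rewrite potential_ge_level // exprn_ege1 // ler_pdivlMr // mul1r.
Qed.

Lemma potential_drift l x y : 0 < l -> x <= l -> 2 * x <= y ->
  potential (2 * (l * (l + 1))) y + (x + 1) ^+ 2 / (l * (l + 1))
  <= potential l x + (y + 1) / (l * (l + 1)).
Proof.
move=> l0 xl xy; set c := l * (l + 1).
have c0 : 0 < c by rewrite /c mulr_gt0 // addr_gt0.
rewrite [potential l x]potential_le_level //.
have [yL|/ltW Ly] := leP y (2 * c).
  rewrite [potential _ y]potential_le_level // -subr_ge0.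
  have -> : (x / l) ^+ 2 + (y + 1) / c - ((y / (2 * c)) ^+ 2 + (x + 1) ^+ 2 / c)
    = (4 * l * x ^+ 2 + (y - 2 * x) * (4 * c - y - 2 * x)) / (2 * c) ^+ 2.
    by rewrite /c; field; lra.
  apply: divr_ge0; last exact: sqr_ge0.
  have xc : x <= c by rewrite /c; nra.
  by apply: addr_ge0; [nra | apply: mulr_ge0; lra].
rewrite [potential _ y]potential_ge_level //; last by lra.
rewrite -subr_ge0.
have -> : (x / l) ^+ 2 + (y + 1) / c - (1 + (x + 1) ^+ 2 / c)
  = ((x - l) ^+ 2 + l ^+ 3) / (l ^+ 2 * (l + 1)) + (y - 2 * c) / c.
  by rewrite /c; field; lra.
by apply: addr_ge0; apply: divr_ge0; nra.
Qed.

Definition level (tau : R) (i : nat) : R := (tau ^+ (2 ^ i) - 1) / 2.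

Lemma level0 tau : level tau 0 = (tau - 1) / 2.
Proof. by rewrite /level expn0 expr1. Qed.

Lemma levelS tau i : level tau i.+1 = 2 * (level tau i * (level tau i + 1)).
Proof. by rewrite /level expnS mulnC exprM; field. Qed.

Lemma level_gt0 tau i : 1 < tau -> 0 < level tau i.
Proof. by move=> tau1; rewrite divr_gt0 // subr_gt0 exprn_egt1 // -lt0n expn_gt0. Qed.

Lemma potential_level0_le tau x : 1 < tau -> 0 <= x ->
  potential (level tau 0) x <= 4 * (x / (tau - 1)) ^+ 2.
Proof.
move=> tau1 x0; rewrite level0; apply: le_trans (potential_le_sqr _ x0) _; first lra.
suff -> : (x / ((tau - 1) / 2)) ^+ 2 = 4 * (x / (tau - 1)) ^+ 2 by [].
by field; lra.
Qed.

End potential.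

Section measurability.
Context d (T : measurableType d) (R : realType).

Lemma measurable_potential (D : set T) (f : T -> R) (l : R) :
  measurable_fun D f -> measurable_fun D (fun t => potential l (f t)).
Proof.
move=> mf; apply: measurable_funX; apply: measurable_funM => //.
exact: measurable_minr.
Qed.

Lemma hist_preimage (X : nat -> T -> R) (i j : nat) (B : set R) :
  (j <= i)%N -> measurable B -> hist X i (X j @^-1` B).
Proof. by move=> ji mB; apply: sub_sigma_algebra; exists j; split => //; exists B. Qed.

End measurability.

Section integral_comparison.
Local Open Scope ereal_scope.
Context d (T : measurableType d) (R : realType) (mu : {measure set T -> \bar R}).

Lemma ge0_le_integral_split (A : set T) (f h : T -> R) : measurable A ->
  measurable_fun setT f -> measurable_fun setT h ->
  (forall t, (0 <= f t)%R) -> (forall t, (0 <= h t)%R) ->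
  \int[mu]_(t in A) (f t)%:E <= \int[mu]_(t in A) (h t)%:E ->
  \int[mu]_(t in ~` A) (f t)%:E <= \int[mu]_(t in ~` A) (h t)%:E ->
  \int[mu]_t (f t)%:E <= \int[mu]_t (h t)%:E.
Proof.
move=> mA mf mh f0 h0 leA leAC.
have mAC := measurableC mA.
rewrite -(setUv A) !ge0_integral_setU ?setUv //; first exact: leeD.
all: by [apply/measurable_EFinP | move=> t _; rewrite lee_fin | apply/disj_setPCl].
Qed.

Lemma measure_le_integral_potential (S : set T) (g : T -> R) (l : R) :
  (0 < l)%R -> measurable S -> measurable_fun setT g -> (forall t, S t -> l <= g t)%R ->
  mu S <= \int[mu]_t (potential l (g t))%:E.
Proof.
move=> l0 mS mg Sg.
have mpg : measurable_fun setT (fun t => (potential l (g t))%:E).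
  exact/measurable_EFinP/measurable_potential.
rewrite -[mu S]mul1e -integral_cst //.
apply: (@le_trans _ _ (\int[mu]_(t in S) (potential l (g t))%:E)).
  apply: ge0_le_integral => //; first exact: measurable_funS mpg.
  by move=> t St; rewrite potential_ge_level ?Sg.
apply: ge0_subset_integral => // t _; exact: potential_ge0.
Qed.

Lemma ge0_le_integral_compensated (D : set T) (f g h k : T -> R) (b : R) :
  measurable D -> (0 <= b)%R ->
  measurable_fun setT f -> measurable_fun setT g ->
  measurable_fun setT h -> measurable_fun setT k ->
  (forall t, 0 <= f t)%R -> (forall t, 0 <= g t)%R ->
  (forall t, 0 <= h t)%R -> (forall t, 0 <= k t)%R ->
  {ae mu, forall t, D t -> f t + b * g t <= h t + b * k t}%R ->
  \int[mu]_(t in D) (k t)%:E <= \int[mu]_(t in D) (g t)%:E ->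
  \int[mu]_(t in D) (g t)%:E \is a fin_num ->
  \int[mu]_(t in D) (f t)%:E <= \int[mu]_(t in D) (h t)%:E.
Proof.
move=> mD b0 mf mg mh mk f0 g0 h0 k0 pointwise kg gfin.
have mD_ (u : T -> R) : measurable_fun setT u -> measurable_fun D (fun t => (u t)%:E).
  by move=> mu'; apply/measurable_EFinP; exact: measurable_funS mu'.
have integralDZ (u v : T -> R) : measurable_fun setT u -> measurable_fun setT v ->
    (forall t, 0 <= u t)%R -> (forall t, 0 <= v t)%R ->
    \int[mu]_(t in D) (u t + b * v t)%:E =
    \int[mu]_(t in D) (u t)%:E + b%:E * \int[mu]_(t in D) (v t)%:E.
  move=> mu' mv u0 v0; under eq_integral do rewrite EFinD EFinM.
  rewrite ge0_integralD ?ge0_integralZl_EFin //.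
  all: try by move=> t _; rewrite ?mule_ge0 ?lee_fin.
  - exact: mD_ mv.
  - exact: mD_ mu'.
  - exact: measurable_funeM (mD_ _ mv).
have le_sum : \int[mu]_(t in D) (f t)%:E + b%:E * \int[mu]_(t in D) (g t)%:E <=
    \int[mu]_(t in D) (h t)%:E + b%:E * \int[mu]_(t in D) (k t)%:E.
  rewrite -!integralDZ //; apply: ae_ge0_le_integral => //.
  - by move=> t _; rewrite lee_fin addr_ge0 ?mulr_ge0.
  - exact/mD_/measurable_funD/measurable_funM.
  - by move=> t _; rewrite lee_fin addr_ge0 ?mulr_ge0.
  - exact/mD_/measurable_funD/measurable_funM.
rewrite -(@leeD2rE _ (b%:E * \int[mu]_(t in D) (g t)%:E)) ?fin_numM //.
by apply: le_trans le_sum _; rewrite leeD2l // lee_wpmul2l // lee_fin.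
Qed.

End integral_comparison.

Section finite_measure.
Local Open Scope ereal_scope.
Context d (T : measurableType d) (R : realType) (mu : {finite_measure set T -> \bar R}).

Lemma ge0_integral_bounded_fin_num (D : set T) (f : T -> R) (M : R) :
  measurable D -> measurable_fun D f -> (forall t, D t -> 0 <= f t <= M)%R ->
  \int[mu]_(t in D) (f t)%:E \is a fin_num.
Proof.
move=> mD mf f0M.
have f0 t : D t -> (0 <= (f t)%:E) by move=> /f0M /andP[f0 _]; rewrite lee_fin.
rewrite ge0_fin_numE; last exact: integral_ge0.
apply: (@le_lt_trans _ _ (\int[mu]_(t in D) (cst M%:E) t)).
  apply: ge0_le_integral => //; first exact/measurable_EFinP.
  by move=> t /f0M /andP[_ fM]; rewrite lee_fin.
by rewrite integral_cst // ltey_eq fin_numM // fin_num_measure.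
Qed.

Lemma potential_integral_nonincreasing (Xi Xj : T -> R) (l : R) :
  (0 < l)%R -> measurable_fun setT Xi -> measurable_fun setT Xj ->
  (forall t, 0 <= Xi t)%R -> (forall t, 0 <= Xj t)%R ->
  {ae mu, forall t, 2 * (Xi t - 1) <= Xj t - 1}%R ->
  \int[mu]_(t in [set t | Xi t < 1 + l]%R) (Xj t)%:E <=
    \int[mu]_(t in [set t | Xi t < 1 + l]%R) (Xi t ^+ 2)%:E ->
  \int[mu]_t (potential (2 * (l * (l + 1))) (Xj t - 1))%:E <=
    \int[mu]_t (potential l (Xi t - 1))%:E.
Proof.
move=> l0 mXi mXj Xi0 Xj0 jump ce; set B := [set t | Xi t < 1 + l]%R.
set c := (l * (l + 1))%R; have c0 : (0 < c)%R by rewrite mulr_gt0 // addr_gt0.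
have mB : measurable B.
  by rewrite -[B]setTI; exact: (mXi measurableT _ (measurable_itv `]-oo, (1 + l)%R[)).
have mpot (Y : T -> R) (m : R) :
    measurable_fun setT Y -> measurable_fun setT (fun t => potential m (Y t - 1)).
  by move=> mY; apply/measurable_potential/measurable_funB.
have mXi2 : measurable_fun setT (fun t => Xi t ^+ 2)%R by exact: measurable_funX.
have on_B : \int[mu]_(t in B) (potential (2 * c) (Xj t - 1))%:E <=
    \int[mu]_(t in B) (potential l (Xi t - 1))%:E.
  apply: (ge0_le_integral_compensated (g := fun t => (Xi t ^+ 2)%R) (k := Xj)
    (b := c^-1) mB) => //; rewrite ?invr_ge0 ?ltW //.
  - exact: mpot.
  - exact: mpot.
  - by move=> t; exact: potential_ge0.
  - by move=> t; exact: sqr_ge0.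
  - by move=> t; exact: potential_ge0.
  - apply: filterS jump => t jump_t Bt.
    have Xi_le : (Xi t - 1 <= l)%R by have : (Xi t < 1 + l)%R := Bt; lra.
    by have := potential_drift l0 Xi_le jump_t; rewrite !subrK ![(_ / _)%R]mulrC.
  apply: (@ge0_integral_bounded_fin_num _ _ ((1 + l) ^+ 2)%R mB).
    exact: measurable_funS mXi2.
  by move=> t Bt; rewrite sqr_ge0 /=; have := Xi0 t; have : (Xi t < 1 + l)%R := Bt; nra.
have off_B : \int[mu]_(t in ~` B) (potential (2 * c) (Xj t - 1))%:E <=
    \int[mu]_(t in ~` B) (potential l (Xi t - 1))%:E.
  apply: ae_ge0_le_integral; first exact: measurableC.
  - by move=> t _; rewrite lee_fin potential_ge0.
  - exact/measurable_EFinP/measurable_funS/mpot.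
  - by move=> t _; rewrite lee_fin potential_ge0.
  - exact/measurable_EFinP/measurable_funS/mpot.
  apply: filterS jump => t jump_t /negP; rewrite -leNgt => Xi_ge.
  by rewrite lee_fin (potential_ge_level l0) ?potential_le1 //; lra.
apply: (ge0_le_integral_split mB) => //; try exact: mpot.
all: by move=> t; exact: potential_ge0.
Qed.

End finite_measure.

Theorem lemma3p2 (d : measure_display) (T : measurableType d) (R : realType)
  (P : probability T R) (k : nat) (X0 : R) (X : nat -> T -> R) (tau : R) :
  1 < X0 ->
  (forall t, X 0%N t = X0) ->
  (forall i, (1 <= i <= k)%N -> measurable_fun setT (X i)) ->
  (forall i, (1 <= i <= k)%N -> forall t, 0 <= X i t) ->
  (forall i, (i < k)%N -> {ae P, forall t, 2 * (X i t - 1) <= X i.+1 t - 1}) ->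
  (forall i, (i < k)%N -> cond_exp_le P X i (X i.+1) (fun t => X i t ^+ 2)) ->
  1 + 4 * (X0 - 1) <= tau ->
  (P [set t | (tau ^+ (2 ^ k) <= X k t)%R] <= (48 * ((X0 - 1) / (tau - 1)) ^+ 2)%:E)%E.
Proof.
move=> X0_gt1 X0E mX X_ge0 jump ce tau_ge.
have tau_gt1 : 1 < tau by lra.
have lvl_gt0 i : 0 < level tau i := level_gt0 i tau_gt1.
have {}mX i : (i <= k)%N -> measurable_fun setT (X i).
  case: i => [_|i ik]; last exact: mX.
  by rewrite (_ : X 0%N = cst X0); [exact: measurable_cst | apply: funext].
have {}X_ge0 i : (i <= k)%N -> forall t, 0 <= X i t.
  by case: i => [_ t|i ik]; [rewrite X0E; lra | exact: X_ge0].
pose e i := (\int[P]_t (potential (level tau i) (X i t - 1))%:E)%E.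
have e_le i : (i <= k)%N -> (e i <= e 0%N)%E.
  elim: i => // i IH ik; apply: le_trans (IH (ltnW ik)).
  rewrite /e levelS; apply: potential_integral_nonincreasing => //.
  - exact: mX (ltnW ik).
  - exact: mX ik.
  - exact: X_ge0 (ltnW ik).
  - exact: X_ge0 ik.
  - exact: jump.
  by apply: ce => //; exact: (hist_preimage (leqnn i) (measurable_itv `]-oo, 1 + level tau i[)).
have e0 : e 0%N = (potential (level tau 0) (X0 - 1))%:E.
  rewrite /e; under eq_integral do rewrite X0E.
  by rewrite integral_cst // -[X in (_ * X)%E]/(P setT) probability_setT mule1.
have mS : measurable [set t | tau ^+ (2 ^ k) <= X k t].
  by rewrite -preimage_itvcy -[X in measurable X]setTI; exact: mX.
have mXk : measurable_fun setT (fun t => X k t - 1).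
  by apply: measurable_funB => //; exact: mX.
apply: (le_trans (measure_le_integral_potential P (lvl_gt0 k) mS mXk _)).
  by move=> t /=; have := lvl_gt0 k; rewrite /level; lra.
apply: le_trans (e_le k (leqnn k)) _; rewrite e0 lee_fin.
apply: le_trans (potential_level0_le tau_gt1 _) _; first lra.
by apply: ler_wpM2r; [exact: sqr_ge0 | lra].
Qed.
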